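(* Let $Q$ be a non-trivial quotient of the identity functor on the category of abelian groups. Then the essential image of $Q$ contains either a non-trivial finite cyclic group, or all free abelian groups $\mathbb{Z}^{\oplus X}$ ($X$ any set).
   Context: A quotient of the identity functor on abelian groups is a functor $Q$ with a natural transformation $q:\mathrm{Id}\to Q$ such that each $q_A:A\to Q(A)$ is surjective. It is non-trivial if $Q(A)\neq 0$ for some $A$. The essential image of $Q$ is the class of groups isomorphic to $Q(A)$ for some abelian group $A$. *)

From HB Require Import structures.
From mathcomp Require Import all_boot all_order all_algebra.
From mathcomp Require Import boolp.
From mathcomp Require Import freeg.
Set Implicit Arguments. Unset Strict Implicit. Unset Printing Implicit Defensive.
Import GRing.Theory.
Local Open Scope ring_scope.

(* An endofunctor of the category of abelian groups. Preservation of identities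
   and composition is stated extensionally (for any additive map that is
   pointwise the identity / the composite). *)
Record AbFunctor := {
  Fobj :> zmodType -> zmodType;
  Fmap : forall (A B : zmodType), {additive A -> B} -> {additive Fobj A -> Fobj B};
  Fmap_id : forall (A : zmodType) (f : {additive A -> A}),
      (forall x, f x = x) -> forall y, Fmap f y = y;
  Fmap_comp : forall (A B C : zmodType) (f : {additive A -> B})
      (g : {additive B -> C}) (h : {additive A -> C}),
      (forall x, h x = g (f x)) -> forall y, Fmap h y = Fmap g (Fmap f y)
}.

Record IdQuotient := {
  QF :> AbFunctor;
  qnat : forall A : zmodType, {additive A -> QF A};
  qnat_natural : forall (A B : zmodType) (f : {additive A -> B}) (x : A),
      Fmap QF f (qnat A x) = qnat B (f x);
  qnat_surj : forall (A : zmodType) (y : QF A), exists x : A, qnat A x = y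
}.

Definition nontrivial_quotient (Q : IdQuotient) : Prop :=
  exists (A : zmodType) (y : Q A), y <> 0.

Definition ab_iso (A B : zmodType) : Prop :=
  exists f : {additive A -> B}, bijective f.

Definition in_ess_image (Q : IdQuotient) (G : zmodType) : Prop :=
  exists A : zmodType, ab_iso (Q A) G.

(* The free abelian group Z^(X) on an arbitrary set (type) X;
   {classic X} equips X with a (classical) choice structure. *)
Definition free_ab (X : Type) : zmodType := {freeg {classic X} / int}.

(* Let q = qnat Q int.  Its kernel is a subgroup n Z of Z.  If n = 1 then q 1 = 0,
   and naturality along k |-> a *~ k kills every q_A a, so Q is trivial.  If n > 1,
   the surjection q induces Q(Z) ~ Z/n.  If n = 0, q is injective; naturality along
   the coefficient maps Z^(X) -> Z, which separate points, then makes q_(Z^(X))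
   injective, hence an isomorphism Z^(X) ~ Q(Z^(X)). *)
From mathcomp Require Import all_boot all_order all_algebra.
From mathcomp Require Import boolp freeg.
From HB Require Import structures.
Set Implicit Arguments. Unset Strict Implicit. Unset Printing Implicit Defensive.
Import GRing.Theory.
Local Open Scope ring_scope.

Lemma ab_iso_inverse (A B : zmodType) (g : {additive A -> B}) :
  injective g -> (forall y, exists x, g x = y) -> ab_iso B A.
Proof.
move=> g_inj g_surj; have [h hK] := choice g_surj.
have hM : GRing.zmod_morphism h by move=> x y; apply: g_inj; rewrite raddfB !hK.
pose hA : {additive B -> A} := HB.pack h (GRing.isZmodMorphism.Build B A h hM).
by exists hA; exists g => x /=; [apply: hK | apply: g_inj; rewrite hK].
Qed.

Section AdditiveFromInt.

Variables (B : zmodType) (g : {additive int -> B}).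

Lemma raddf_modz (n k : int) : g n = 0 -> g (k %% n)%Z = g k.
Proof.
move=> gn0; rewrite {2}(divz_eq k n) [RHS]raddfD.
by rewrite [_ * n]mulrC -mulrzz raddfMz gn0 mul0rz add0r.
Qed.

Lemma raddf_int_kernel : exists n : nat, forall k : int, (g k == 0) = (n %| k)%Z.
Proof.
have [[m /andP[m_neq0 gm0]] | ker0] :=
  pselect (exists k : int, (k != 0) && (g k == 0)); last first.
  exists 0%N => k; rewrite dvd0z; apply/idP/eqP => [gk0 | ->]; last by rewrite raddf0.
  by apply/eqP/contraT => k_neq0; exfalso; apply: ker0; exists k; rewrite k_neq0.
have ker_pos : exists m : nat, (0 < m)%N && (g m == 0).
  exists `|m|%N; rewrite absz_gt0 m_neq0 abszEsign.
  by case: (m < 0); rewrite ?expr1 ?expr0 ?mulN1r ?mul1r ?raddfN (eqP gm0) ?oppr0 eqxx.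
have [n /andP[n_gt0 /eqP gn0] n_min] := ex_minnP ker_pos.
exists n => k; apply/eqP/dvdz_mod0P => [gk0 | k_mod0]; last first.
  by rewrite -(raddf_modz k gn0) k_mod0 raddf0.
have gr0 : g (k %% n)%Z = 0 by rewrite raddf_modz.
set r := (k %% n)%Z in gr0 *.
have r_ge0 : 0 <= r by apply: modz_ge0; rewrite eqz_nat -lt0n.
have r_ltn : r < n by apply: ltz_pmod; rewrite ltz_nat.
rewrite -(gez0_abs r_ge0) ltz_nat in gr0 r_ltn *.
case: (posnP `|r|%N) => [-> // | r_gt0].
by have := n_min `|r|%N; rewrite r_gt0 gr0 eqxx leqNgt r_ltn => /(_ isT).
Qed.

Lemma ab_iso_Zp_of_raddf_int (n : nat) : (1 < n)%N ->
  (forall k : int, (g k == 0) = (n %| k)%Z) -> (forall y, exists k, g k = y) ->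
  ab_iso B 'Z_n.
Proof.
case: n => [|[|n]] // _ g_ker g_surj.
have gmod k : g (k %% n.+2)%Z = g k by apply: raddf_modz; apply/eqP; rewrite g_ker.
pose h (z : 'Z_n.+2) := g (val z).
have hM : GRing.nmod_morphism h.
  by split=> [|z1 z2]; rewrite /h /= ?raddf0 // -modz_nat gmod PoszD raddfD.
pose hA : {additive 'Z_n.+2 -> B} := HB.pack h (GRing.isNmodMorphism.Build _ _ h hM).
apply: (@ab_iso_inverse _ _ hA).
  apply: raddf_inj => z /eqP; rewrite /= /h g_ker dvdzE /= => n_dvd_z.
  apply: val_inj => /=; case: (posnP z) => // z_gt0.
  by rewrite gtnNdvd in n_dvd_z.
move=> y; have [k <-] := g_surj y; exists (1 *~ k).
have val1 : val (1 : 'Z_n.+2) = 1%N by [].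
by rewrite raddfMz /= /h val1 -raddfMz mulrzz mul1r.
Qed.

End AdditiveFromInt.

Section IdQuotientTheory.

Variable Q : IdQuotient.

Lemma qnat_int1_neq0 : nontrivial_quotient Q -> qnat Q int 1 != 0.
Proof.
move=> [A [y y_neq0]]; apply/eqP => q1_eq0; apply: y_neq0.
have [a <-] := qnat_surj y.
have := qnat_natural Q (intmul a : {additive int -> A}) 1.
by rewrite q1_eq0 raddf0 /= mulr1z.
Qed.

Lemma qnat_inj_of_separating (A B : zmodType) (I : Type)
    (f : I -> {additive A -> B}) :
  injective (qnat Q B) -> (forall x, (forall i, f i x = 0) -> x = 0) ->
  injective (qnat Q A).
Proof.
move=> qB_inj f_sep; apply: raddf_inj => x qx0; apply: f_sep => i.
by apply: qB_inj; rewrite -qnat_natural qx0 !raddf0.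
Qed.

Lemma in_ess_image_of_qnat_inj (A : zmodType) :
  injective (qnat Q A) -> in_ess_image Q A.
Proof. by move=> q_inj; exists A; apply: ab_iso_inverse q_inj (@qnat_surj Q A). Qed.

Lemma in_ess_image_free_ab (X : Type) :
  injective (qnat Q int) -> in_ess_image Q (free_ab X).
Proof.
move=> qZ_inj; apply: in_ess_image_of_qnat_inj.
apply: (@qnat_inj_of_separating _ _ _ (fun x => coeff x : {additive _ -> int})) qZ_inj _.
by move=> u u0; apply/eqP/freeg_eqP => x; rewrite u0 coeff0.
Qed.

End IdQuotientTheory.

Theorem theorem3p19 (Q : IdQuotient) :
  nontrivial_quotient Q ->
  (exists n : nat, (1 < n)%N /\ in_ess_image Q ('Z_n : zmodType))
  \/ (forall X : Type, in_ess_image Q (free_ab X)).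
Proof.
move=> Q_nontriv; have [[|[|n]] q_ker] := raddf_int_kernel (qnat Q int).
- right=> X; apply: in_ess_image_free_ab; apply: raddf_inj => k /eqP.
  by rewrite q_ker dvd0z => /eqP.
- by have := qnat_int1_neq0 Q_nontriv; rewrite q_ker dvd1z.
- left; exists n.+2; split=> //; exists int.
  exact: ab_iso_Zp_of_raddf_int q_ker (@qnat_surj Q int).
Qed.
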